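(* Let $\alpha\in\mathbb{C}$ and let $\Gamma_\alpha\subset P^+(4)$ be the span of the seventeen elements $E^i_\alpha,F^i_\alpha,H^i_\alpha$ ($i=1,2,3$), $T^j_\alpha,D^j_\alpha$ ($j=1,\dots,4$) listed in the context. Then the linear map $\bar\rho_\alpha:\Gamma_\alpha\to\mathrm{End}(\mathcal{W}^{2|2})$ defined on this basis by $$\bar\rho_\alpha(T^1_\alpha)=tE_{13}+tE_{42},\quad \bar\rho_\alpha(T^2_\alpha)=tE_{14}-tE_{32},\quad \bar\rho_\alpha(T^3_\alpha)=tE_{24}+tE_{31},\quad \bar\rho_\alpha(T^4_\alpha)=-tE_{23}+tE_{41},$$ $$\bar\rho_\alpha(D^1_\alpha)=(d+\alpha t^{-1})E_{24}+dE_{31},\quad \bar\rho_\alpha(D^2_\alpha)=-(d+\alpha t^{-1})E_{23}+dE_{41},$$ $$\bar\rho_\alpha(D^3_\alpha)=(d+\alpha t^{-1})E_{13}+dE_{42},\quad \bar\rho_\alpha(D^4_\alpha)=(d+\alpha t^{-1})E_{14}-dE_{32},$$ $$\bar\rho_\alpha(E^1_\alpha)=t^2 I_4,\quad \bar\rho_\alpha(F^1_\alpha)=(d^2+\alpha t^{-1}d)(E_{11}+E_{22})+(d^2+\alpha d t^{-1})(E_{33}+E_{44}),\quad \bar\rho_\alpha(H^1_\alpha)=\Big(td+\tfrac{1+\alpha}{2}\Big)I_4,$$ $$\bar\rho_\alpha(E^2_\alpha)=E_{21},\quad \bar\rho_\alpha(F^2_\alpha)=-E_{12},\quad \bar\rho_\alpha(H^2_\alpha)=-E_{11}+E_{22},$$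 $$\bar\rho_\alpha(E^3_\alpha)=E_{34},\quad \bar\rho_\alpha(F^3_\alpha)=E_{43},\quad \bar\rho_\alpha(H^3_\alpha)=E_{33}-E_{44},$$ is an injective homomorphism of Lie superalgebras. Consequently $\Gamma(2,-1-\alpha,\alpha-1)$ embeds into $\mathrm{End}(\mathcal{W}^{2|2})$.
   Context: $P^+(4)$ is the Poisson superalgebra of finite sums $\sum_{i\ge0}a_i(t)\tau^i\otimes\omega_i$ with $a_i\in\mathbb{C}[t,t^{-1}]$, $\tau$ even, $\omega_i\in\Lambda(\xi_1,\xi_2,\eta_1,\eta_2)$ (Grassmann algebra on odd generators), with bracket, for homogeneous $A$ of parity $p(A)$, $\{A,B\}=\partial_\tau A\,\partial_tB-\partial_tA\,\partial_\tau B+(-1)^{p(A)+1}\sum_{i=1}^2(\partial_{\xi_i}A\,\partial_{\eta_i}B+\partial_{\eta_i}A\,\partial_{\xi_i}B)$ (left odd derivatives). The elements spanning $\Gamma_\alpha$ are: $E^1_\alpha=t^2$, $F^1_\alpha=\tau^2-2\alpha t^{-2}\xi_1\xi_2\eta_1\eta_2$, $H^1_\alpha=t\tau$, $E^2_\alpha=\xi_1\xi_2$, $F^2_\alpha=\eta_1\eta_2$, $H^2_\alpha=\xi_1\eta_1+\xi_2\eta_2$, $E^3_\alpha=\xi_1\eta_2$, $F^3_\alpha=\xi_2\eta_1$, $H^3_\alpha=\xi_1\eta_1-\xi_2\eta_2$, $T^1_\alpha=t\eta_1$, $T^2_\alpha=t\eta_2$, $T^3_\alpha=t\xi_1$, $T^4_\alpha=t\xi_2$,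 $D^1_\alpha=\tau\xi_1+\alpha t^{-1}\xi_1\xi_2\eta_2$, $D^2_\alpha=\tau\xi_2-\alpha t^{-1}\xi_1\xi_2\eta_1$, $D^3_\alpha=\tau\eta_1+\alpha t^{-1}\xi_2\eta_1\eta_2$, $D^4_\alpha=\tau\eta_2-\alpha t^{-1}\xi_1\eta_1\eta_2$. This span $\Gamma_\alpha$ is closed under the bracket and is a Lie superalgebra isomorphic to $\Gamma(2,-1-\alpha,\alpha-1)$, where $\Gamma(\sigma_1,\sigma_2,\sigma_3)$ ($\sigma_1+\sigma_2+\sigma_3=0$) is Scheunert's Lie superalgebra with even part $\mathfrak{sp}(\psi_1)\oplus\mathfrak{sp}(\psi_2)\oplus\mathfrak{sp}(\psi_3)$ and odd part $V_1\otimes V_2\otimes V_3$ ($V_i$ two-dimensional with nondegenerate skew forms $\psi_i$), odd bracket $[x_1\otimes x_2\otimes x_3,y_1\otimes y_2\otimes y_3]=\sum_{\{i,j,k\}=\{1,2,3\}}\sigma_i\psi_j(x_j,y_j)\psi_k(x_k,y_k)P_i(x_i,y_i)$ with $P_i(x,y)z=\psi_i(y,z)x-\psi_i(z,x)y$. Weyl algebra: $\mathcal{W}=\sum_{i\ge0}\mathbb{C}[t,t^{-1}]d^i$, the associative algebra generated by $\mathbb{C}[t,t^{-1}]$ and $d$ with relations $da=\frac{da}{dt}+ad$ for $a\in\mathbb{C}[t,t^{-1}]$ (the algebra of differential operators with Laurent polynomial coefficients, $d=\partial/\partial t$). $\mathrm{End}(\mathcal{W}^{2|2})$ is the Lie superalgebra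 of $4\times4$ matrices over $\mathcal{W}$, with rows/columns $1,2$ even and $3,4$ odd: a matrix is even if its entries in positions $(k,l)$ with $k,l$ of different parity vanish, odd if its entries with $k,l$ of equal parity vanish, and the bracket is $[X,Y]=XY-(-1)^{p(X)p(Y)}YX$ using matrix multiplication over $\mathcal{W}$. $E_{kl}$ denotes the $4\times4$ matrix with $1$ in position $(k,l)$ and $0$ elsewhere, $wE_{kl}$ has entry $w\in\mathcal{W}$ there, and $I_4$ is the identity matrix. *)

From HB Require Import structures.
From mathcomp Require Import all_boot all_order all_algebra.
From mathcomp Require Import finmap.
From mathcomp Require Import monalg.
Set Implicit Arguments. Unset Strict Implicit. Unset Printing Implicit Defensive.
Import Order.TTheory GRing.Theory Num.Theory.
Local Open Scope ring_scope.

Definition lin1 {K : choiceType} {R : ringType} {V : lmodType R}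
  (f : K -> V) (x : {malg R[K]}) : V :=
  \sum_(u <- msupp x) x@_u *: f u.

Definition bilin {K : choiceType} {R : ringType} {V : lmodType R}
  (f : K -> K -> V) (x y : {malg R[K]}) : V :=
  \sum_(u <- msupp x) \sum_(v <- msupp y) (x@_u * y@_v) *: f u v.

(* The Weyl algebra W = sum_i C[t,t^-1] d^i.  The basis element with key
   (a, m) : int * nat is the normally ordered monomial t^a d^m.  The
   product is the one forced by d a = da/dt + a d, i.e.
   (t^a d^m)(t^b d^n) = sum_k binom(m,k) b(b-1)...(b-k+1) t^(a+b-k) d^(m+n-k). *)
Section Weyl.
Variable C : numClosedFieldType.

Definition W := {malg C[(int * nat)%type]}.

Definition wmon (a : int) (m : nat) : W := << (a, m) >>.

Definition ffz (b : int) (k : nat) : C := \prod_(j < k) (b - j%:Z)%:~R.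

Definition wmul_mon (u v : int * nat) : W :=
  let: (a, m) := u in let: (b, n) := v in
  \sum_(k < m.+1) << ('C(m, k)%:R * ffz b k) *g (a + b - k%:Z, (m + n - k)%N) >>.

Definition wmul (x y : W) : W := bilin wmul_mon x y.

Definition w1 : W := wmon 0 0.
Definition wt : W := wmon 1 0.
Definition wtinv : W := wmon (-1) 0.
Definition wd : W := wmon 0 1.

(* End(W^{2|2}) : 4x4 matrices over W; rows/columns 1,2 even, 3,4 odd
   (indices 0,1 and 2,3 of 'I_4). *)
Definition SM := 'M[W]_4.

Definition mpar (i : 'I_4) : bool := (2 <= i)%N.

Definition smpart (b : bool) (X : SM) : SM :=
  \matrix_(i, j) if (mpar i (+) mpar j) == b then X i j else 0.

Definition smmul (X Y : SM) : SM :=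
  \matrix_(i, j) \sum_(k < 4) wmul (X i k) (Y k j).

Definition smbr (X Y : SM) : SM :=
  \sum_(b : bool) \sum_(c : bool)
    (smmul (smpart b X) (smpart c Y)
     - smmul (smpart c Y) (smpart b X) *~ ((-1) ^+ (b && c))).

(* w E_{kl}, with 1-based k, l as in the paper *)
Definition Ekl (k l : nat) (w : W) : SM :=
  \matrix_(i, j) if (i.+1 == k) && (j.+1 == l) then w else 0.

Definition Idw (w : W) : SM := \matrix_(i, j) if i == j then w else 0.

End Weyl.

(* Basis element with key (a, m, S)
   is t^a tau^m theta_S, where theta_S is the product, in increasing
   order of indices, of the odd generators theta_j (j in S), with
   theta_0 = xi_1, theta_1 = xi_2, theta_2 = eta_1, theta_3 = eta_2. *)
Section Poisson.
Variable C : numClosedFieldType.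

Definition PKey := (int * nat * {set 'I_4})%type.
Definition P := {malg C[PKey]}.

Definition pmon (k : PKey) : P := << k >>.

Definition podd (k : PKey) : bool := odd #|k.2|.

Definition pmul_mon (u v : PKey) : P :=
  let: (a, m, s1) := u in let: (b, n, s2) := v in
  if [disjoint s1 & s2] then
    (-1) ^+ #|[set st : 'I_4 * 'I_4 | (st.1 \in s1) && (st.2 \in s2) && (st.2 < st.1)%N]|
      *: pmon (a + b, (m + n)%N, s1 :|: s2)
  else 0.

Definition pmul (x y : P) : P := bilin pmul_mon x y.

Definition pdt (x : P) : P :=
  lin1 (fun k : PKey => let: (a, m, s1) := k in a%:~R *: pmon (a - 1, m, s1)) x.

Definition pdtau (x : P) : P :=
  lin1 (fun k : PKey => let: (a, m, s1) := k in m%:R *: pmon (a, m.-1, s1)) x.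

Definition pdth (j : 'I_4) (x : P) : P :=
  lin1 (fun k : PKey => let: (a, m, s1) := k in
          if j \in s1 then (-1) ^+ #|[set s in s1 | (s < j)%N]| *: pmon (a, m, s1 :\ j)
          else 0) x.

Definition ppart (b : bool) (x : P) : P :=
  lin1 (fun k : PKey => if podd k == b then pmon k else 0) x.

Definition xi_ (i : 'I_2) : 'I_4 := inord i.
Definition eta_ (i : 'I_2) : 'I_4 := inord (i + 2).

Definition pbr_hom (p : bool) (A B : P) : P :=
  pmul (pdtau A) (pdt B) - pmul (pdt A) (pdtau B)
  + (-1) ^+ (nat_of_bool p).+1 *:
      \sum_(i < 2) (pmul (pdth (xi_ i) A) (pdth (eta_ i) B)
                   + pmul (pdth (eta_ i) A) (pdth (xi_ i) B)).

Definition pbr (A B : P) : P :=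
  pbr_hom false (ppart false A) B + pbr_hom true (ppart true A) B.

Definition ptp (a : int) : P := pmon (a, 0%N, set0).
Definition ptau : P := pmon (0, 1%N, set0).
Definition pth (j : nat) : P := pmon (0, 0%N, [set (inord j : 'I_4)]).
Definition pxi1 : P := pth 0.
Definition pxi2 : P := pth 1.
Definition peta1 : P := pth 2.
Definition peta2 : P := pth 3.

End Poisson.
Arguments ptp {C}.
Arguments ptau {C}.
Arguments pth {C}.
Arguments pxi1 {C}.
Arguments pxi2 {C}.
Arguments peta1 {C}.
Arguments peta2 {C}.

(* The seventeen elements spanning Gamma_alpha, in the order
   E1 F1 H1 E2 F2 H2 E3 F3 H3 T1 T2 T3 T4 D1 D2 D3 D4,
   and their prescribed images under rho_alpha. *)
Section Gamma.
Variables (C : numClosedFieldType) (alpha : C).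

Local Notation "x ** y" := (pmul x y) (at level 40, left associativity).

Definition gam_list : seq (P C) :=
  [:: ptp 2;
      ptau ** ptau - (2 * alpha) *: (ptp (-2) ** (pxi1 ** (pxi2 ** (peta1 ** peta2))));
      ptp 1 ** ptau;
      pxi1 ** pxi2;
      peta1 ** peta2;
      pxi1 ** peta1 + pxi2 ** peta2;
      pxi1 ** peta2;
      pxi2 ** peta1;
      pxi1 ** peta1 - pxi2 ** peta2;
      ptp 1 ** peta1;
      ptp 1 ** peta2;
      ptp 1 ** pxi1;
      ptp 1 ** pxi2;
      ptau ** pxi1 + alpha *: (ptp (-1) ** (pxi1 ** (pxi2 ** peta2)));
      ptau ** pxi2 - alpha *: (ptp (-1) ** (pxi1 ** (pxi2 ** peta1)));
      ptau ** peta1 + alpha *: (ptp (-1) ** (pxi2 ** (peta1 ** peta2)));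
      ptau ** peta2 - alpha *: (ptp (-1) ** (pxi1 ** (peta1 ** peta2)))
  ].

Definition gam (i : 'I_17) : P C := nth 0 gam_list i.

(* parity of the i-th basis element: E,F,H even; T,D odd *)
Definition gpar (i : 'I_17) : bool := (9 <= i)%N.

Local Notation "x *w y" := (wmul x y) (at level 40, left associativity).
Local Notation dat := (wd C + alpha *: wtinv C).

Definition rho_list : seq (SM C) :=
  [:: Idw (wmon C 2 0);
      Ekl 1 1 (wd C *w wd C + alpha *: (wtinv C *w wd C))
      + Ekl 2 2 (wd C *w wd C + alpha *: (wtinv C *w wd C))
      + Ekl 3 3 (wd C *w wd C + alpha *: (wd C *w wtinv C))
      + Ekl 4 4 (wd C *w wd C + alpha *: (wd C *w wtinv C));
      Idw (wt C *w wd C + ((1 + alpha) / 2) *: w1 C);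
      Ekl 2 1 (w1 C);
      - Ekl 1 2 (w1 C);
      - Ekl 1 1 (w1 C) + Ekl 2 2 (w1 C);
      Ekl 3 4 (w1 C);
      Ekl 4 3 (w1 C);
      Ekl 3 3 (w1 C) - Ekl 4 4 (w1 C);
      Ekl 1 3 (wt C) + Ekl 4 2 (wt C);
      Ekl 1 4 (wt C) - Ekl 3 2 (wt C);
      Ekl 2 4 (wt C) + Ekl 3 1 (wt C);
      - Ekl 2 3 (wt C) + Ekl 4 1 (wt C);
      Ekl 2 4 dat + Ekl 3 1 (wd C);
      - Ekl 2 3 dat + Ekl 4 1 (wd C);
      Ekl 1 3 dat + Ekl 4 2 (wd C);
      Ekl 1 4 dat - Ekl 3 2 (wd C)
  ].

Definition rho (i : 'I_17) : SM C := nth 0 rho_list i.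

Definition gamma (c : 'I_17 -> C) : P C := \sum_(i < 17) c i *: gam i.
Definition rhoc (c : 'I_17 -> C) : SM C :=
  \matrix_(k, l) \sum_(i < 17) c i *: rho i k l.

End Gamma.

(* All elements involved have coefficients that are polynomials in alpha over Q.
   We represent them by executable formal sums over Q[alpha] and prove that the
   executable products, derivatives, parity projections and both super brackets
   commute with the denotation into P^+(4), resp. End(W^{2|2}).  The kernel then
   checks by evaluation, for the basis B_i of Gamma_alpha and its images rho(B_i):
   - one table of structure constants c_ijk in Q[alpha] with
     [B_i, B_j] = sum_k c_ijk B_k and [rho B_i, rho B_j] = sum_k c_ijk rho B_k;
   - homogeneity of every B_i and rho B_i;
   - dual certificates: for each i, a Q[alpha]-combination of coefficient
     functionals whose value on the j-th element is delta_ij.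
   Bilinearity of the brackets turns the table into closure of Gamma_alpha and
   the homomorphism property, while the certificates read off the coordinates of
   sum_i c_i B_i and of sum_i c_i rho(B_i), whence linear independence of the B_i
   and injectivity of rho. *)

From Pilot Require Import Defs.
From HB Require Import structures.
From mathcomp Require Import all_boot all_order all_algebra.
From mathcomp Require Import finmap monalg.
From mathcomp Require Import ring.
Set Implicit Arguments. Unset Strict Implicit. Unset Printing Implicit Defensive.
Import GRing.Theory Num.Theory.
Local Open Scope ring_scope.

(** * Linear maps, structure constants and dual bases *)

Section LinearFun.
Variables (R : comPzRingType) (U V Z : lmodType R).

Lemma linear_apply0 (f : U -> V) : linear f -> f 0 = 0.
Proof.
move=> lf; have := lf 1 0 0; rewrite scaler0 addr0 scale1r => f0D.
by apply: (@addrI _ (f 0)); rewrite addr0 -f0D.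
Qed.

Lemma linear_funD (f g : U -> V) : linear f -> linear g -> linear (fun x => f x + g x).
Proof. by move=> lf lg a x y; rewrite lf lg scalerDr addrACA. Qed.

Lemma linear_funN (f : U -> V) : linear f -> linear (fun x => - f x).
Proof. by move=> lf a x y; rewrite lf opprD scalerN. Qed.

Lemma linear_funB (f g : U -> V) : linear f -> linear g -> linear (fun x => f x - g x).
Proof. by move=> lf lg; apply: linear_funD => //; apply: linear_funN. Qed.

Lemma linear_funZ (s : R) (f : U -> V) : linear f -> linear (fun x => s *: f x).
Proof. by move=> lf a x y; rewrite lf scalerDr !scalerA mulrC. Qed.

Lemma linear_funMz (m : int) (f : U -> V) : linear f -> linear (fun x => f x *~ m).
Proof. by move=> lf a x y; rewrite lf mulrzDl scalerMzr. Qed.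

Lemma linear_comp (f : V -> Z) (g : U -> V) : linear f -> linear g -> linear (f \o g).
Proof. by move=> lf lg a x y /=; rewrite lg lf. Qed.

Lemma linear_fun_sum (I : Type) (r : seq I) (F : I -> U -> V) :
  (forall i, linear (F i)) -> linear (fun x => \sum_(i <- r) F i x).
Proof.
by move=> lF a x y; rewrite scaler_sumr -big_split; apply: eq_bigr => i _; rewrite lF.
Qed.

Lemma linear_applyZ (f : U -> V) a x : linear f -> f (a *: x) = a *: f x.
Proof. by move=> lf; rewrite -[a *: x]addr0 lf linear_apply0 // addr0. Qed.

Lemma linear_apply_sum (f : U -> V) (I : Type) (r : seq I) (F : I -> U) :
  linear f -> f (\sum_(i <- r) F i) = \sum_(i <- r) f (F i).
Proof.
move=> lf; elim: r => [|i r IH]; first by rewrite !big_nil linear_apply0.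
by rewrite !big_cons -IH; have := lf 1 (F i) (\sum_(j <- r) F j); rewrite !scale1r.
Qed.

Lemma linear_apply_comb (f : U -> V) (I : finType) (c : I -> R) (u : I -> U) :
  linear f -> f (\sum_i c i *: u i) = \sum_i c i *: f (u i).
Proof.
by move=> lf; rewrite linear_apply_sum //; apply: eq_bigr => i _; rewrite linear_applyZ.
Qed.

End LinearFun.

Section StructureConstants.
Variables (R : comPzRingType) (U V : lmodType R) (I : finType).

Lemma bilinear_structure_constants (b : U -> U -> V) (u : I -> U) (w : I -> V)
    (t : I -> I -> I -> R) :
  (forall y, linear (b ^~ y)) -> (forall x, linear (b x)) ->
  (forall i j, b (u i) (u j) = \sum_k t i j k *: w k) ->
  forall c1 c2 : I -> R, b (\sum_i c1 i *: u i) (\sum_j c2 j *: u j)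
                         = \sum_k (\sum_i \sum_j c1 i * c2 j * t i j k) *: w k.
Proof.
move=> lb_l lb_r b_uu c1 c2.
rewrite (@linear_apply_comb _ _ _ _ _ c1 u (lb_l _)).
under eq_bigr => i _ do rewrite (@linear_apply_comb _ _ _ _ _ c2 u (lb_r _)).
under eq_bigr => i _ do under eq_bigr => j _ do rewrite b_uu.
under [RHS]eq_bigr do rewrite scaler_suml.
rewrite exchange_big; apply: eq_bigr => i _; rewrite scaler_sumr.
under [RHS]eq_bigr do rewrite scaler_suml.
rewrite exchange_big; apply: eq_bigr => j _; rewrite !scaler_sumr.
by apply: eq_bigr => k _; rewrite !scalerA.
Qed.

End StructureConstants.

Lemma coord_of_dual (R : comPzRingType) (I : finType) (K : Type) (phi : K -> I -> R)
    (cert : I -> seq (R * K)) :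
  (forall i j, \sum_(p <- cert i) p.1 * phi p.2 j = (i == j)%:R) ->
  forall (c : I -> R) i, c i = \sum_(p <- cert i) p.1 * \sum_j c j * phi p.2 j.
Proof.
move=> dual c i; transitivity (\sum_j c j * (i == j)%:R).
  rewrite (bigD1 i) //= eqxx mulr1 big1 ?addr0 // => j.
  by rewrite eq_sym => /negbTE ->; rewrite mulr0.
under [RHS]eq_bigr do rewrite mulr_sumr; rewrite [RHS]exchange_big /=.
by apply: eq_bigr => j _; rewrite -dual mulr_sumr; apply: eq_bigr => p _; rewrite mulrCA.
Qed.

Section Lin1.
Variables (R : comNzRingType) (K : choiceType) (V : lmodType R).

Lemma lin1_supp (f : K -> V) (x : {malg R[K]}) (d : {fset K}) :
  (msupp x `<=` d)%fset -> lin1 f x = \sum_(u <- d) x@_u *: f u.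
Proof.
move=> le; rewrite /lin1 (big_fset_incl _ le) //= => k _ /mcoeff_outdom ->.
by rewrite scale0r.
Qed.

Lemma lin1_linear (f : K -> V) : linear (lin1 f : {malg R[K]} -> V).
Proof.
move=> a x y; set d := (msupp x `|` msupp y)%fset.
have lexy : (msupp (a *: x + y) `<=` d)%fset.
  by apply: fsubset_trans (msuppD_le _ _) _; exact: fsetSU (msuppZ_le _ _).
rewrite !(@lin1_supp _ _ d) ?fsubsetUl ?fsubsetUr // scaler_sumr -big_split /=.
by apply: eq_bigr => u _; rewrite mcoeffD mcoeffZ scalerDl scalerA.
Qed.

Lemma lin1U (f : K -> V) k : lin1 f << k >> = f k.
Proof. by rewrite (@lin1_supp _ _ [fset k]%fset) ?msuppU_le // big_seq_fset1 mcoeffUU scale1r. Qed.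

Lemma monalgUZ c k : << c *g k >> = c *: << k >> :> {malg R[K]}.
Proof. by apply/malgP => k'; rewrite mcoeffZ !mcoeffU mulr_natr. Qed.

Lemma eq_lin1 (f g : K -> V) : f =1 g -> lin1 f =1 lin1 g.
Proof. by move=> fg x; apply: eq_bigr => u _; rewrite fg. Qed.

Lemma bilin_lin1 (f : K -> K -> V) x y : bilin f x y = lin1 (fun u => lin1 (f u) y) x.
Proof.
apply: eq_bigr => u _; rewrite scaler_sumr.
by apply: eq_bigr => v _; rewrite scalerA.
Qed.

Lemma bilin_linear_l (f : K -> K -> V) y : linear (bilin f ^~ y).
Proof. by move=> a x x'; rewrite !bilin_lin1 lin1_linear. Qed.

Lemma bilin_linear_r (f : K -> K -> V) x : linear (bilin f x).
Proof.
move=> a y y'; rewrite !bilin_lin1.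
transitivity (lin1 (fun u => a *: lin1 (f u) y + lin1 (f u) y') x).
  by apply: eq_lin1 => u; rewrite lin1_linear.
rewrite /lin1 scaler_sumr -big_split /=; apply: eq_bigr => u _.
by rewrite scalerDr !scalerA mulrC.
Qed.

End Lin1.

(** * Polynomials in alpha and formal sums *)

(* Coefficient list, constant term first. *)
Definition ratpoly := seq rat.

Fixpoint qadd (p q : ratpoly) : ratpoly :=
  match p, q with
  | [::], _ => q
  | _, [::] => p
  | a :: p', b :: q' => (a + b) :: qadd p' q'
  end.

Definition qmul (p q : ratpoly) : ratpoly :=
  foldr (fun a pq => qadd (map ( *%R a) q) (0 :: pq)) [::] p.

Definition qopp (p : ratpoly) : ratpoly := map -%R p.

Definition qeq0 (p : ratpoly) : bool := all (eq_op^~ 0) p.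

Definition qsum (ps : seq ratpoly) : ratpoly := foldr qadd [::] ps.

Section QpolyEval.
Variables (R : numFieldType) (alpha : R).

Fixpoint qeval (p : ratpoly) : R := if p is a :: p' then ratr a + alpha * qeval p' else 0.

Lemma qevalD p q : qeval (qadd p q) = qeval p + qeval q.
Proof.
elim: p q => [|a p IH] [|b q] /=; rewrite ?add0r ?addr0 //.
by rewrite IH rmorphD; ring.
Qed.

Lemma qevalM p q : qeval (qmul p q) = qeval p * qeval q.
Proof.
have qevalZ a r : qeval (map ( *%R a) r) = ratr a * qeval r.
  by elim: r => [|b r IH] /=; rewrite ?mulr0 // IH rmorphM; ring.
elim: p => [|a p IH] /=; first by rewrite mul0r.
by rewrite qevalD qevalZ /= IH rmorph0; ring.
Qed.

Lemma qevalN p : qeval (qopp p) = - qeval p.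
Proof. by elim: p => [|a p IH] /=; rewrite ?oppr0 // IH rmorphN; ring. Qed.

Lemma qeval_eq0 p : qeq0 p -> qeval p = 0.
Proof. by elim: p => [|a p IH] //= /andP[/eqP -> /IH ->]; rewrite rmorph0 mulr0 addr0. Qed.

Lemma qeval_eq p q : qeq0 (qadd p (qopp q)) -> qeval p = qeval q.
Proof. by move/qeval_eq0/eqP; rewrite qevalD qevalN subr_eq0 => /eqP. Qed.

Lemma qevalC r : qeval [:: r] = ratr r.
Proof. by rewrite /= mulr0 addr0. Qed.

Lemma qeval_sum ps : qeval (qsum ps) = \sum_(p <- ps) qeval p.
Proof. by elim: ps => [|p ps IH]; rewrite ?big_nil ?big_cons //= qevalD IH. Qed.

End QpolyEval.

Definition fsum (K : Type) := seq (ratpoly * K).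

Section FormalSum.
Variable K : Type.

Definition fsZ (q : ratpoly) (l : fsum K) : fsum K := [seq (qmul q x.1, x.2) | x <- l].
Definition fsN (l : fsum K) : fsum K := [seq (qopp x.1, x.2) | x <- l].
Definition fslin (g : K -> fsum K) (l : fsum K) : fsum K :=
  flatten [seq fsZ x.1 (g x.2) | x <- l].
Definition fsbilin (g : K -> K -> fsum K) (l1 l2 : fsum K) : fsum K :=
  flatten [seq flatten [seq fsZ (qmul x.1 y.1) (g x.2 y.2) | y <- l2] | x <- l1].

Definition comb_fs (c : nat -> ratpoly) (fam : seq (fsum K)) : fsum K :=
  flatten [seq fsZ (c k) (nth [::] fam k) | k <- iota 0 (size fam)].

End FormalSum.

Definition probe_fs (T K : Type) (coef : T -> K -> ratpoly) (cert : seq (ratpoly * K))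
    (x : T) : ratpoly :=
  qsum [seq qmul p.1 (coef x p.2) | p <- cert].

Definition dual_ok (T K : Type) (coef : T -> K -> ratpoly) (x0 : T) (fam : seq T)
    (cert : seq (seq (ratpoly * K))) : bool :=
  all (fun i => all (fun j =>
    qeq0 (qadd (probe_fs coef (nth [::] cert i) (nth x0 fam j)) (qopp [:: (i == j)%:R])))
  (iota 0 (size fam))) (iota 0 (size fam)).

Section FormalSumEq.
Variable K : eqType.

Definition fscoef (l : fsum K) (k : K) : ratpoly :=
  qsum [seq x.1 | x <- l & x.2 == k].

Fixpoint fsinsert (x : ratpoly * K) (l : fsum K) : fsum K :=
  if l is y :: l' then
    if x.2 == y.2 then (qadd x.1 y.1, y.2) :: l' else y :: fsinsert x l'
  else [:: x].

Definition fsnorm (l : fsum K) : fsum K := foldr fsinsert [::] l.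

Definition fseq0 (l : fsum K) : bool := all (qeq0 \o fst) (fsnorm l).
Definition fseq (l1 l2 : fsum K) : bool := fseq0 (l1 ++ fsN l2).

End FormalSumEq.

Section Denotation.
Variables (R : numFieldType) (alpha : R) (K : eqType) (K' : choiceType) (emb : K -> K').
Local Notation qeval := (qeval alpha).

Definition fsden (l : fsum K) : {malg R[K']} := \sum_(x <- l) qeval x.1 *: << emb x.2 >>.

Lemma fsden_cons x l : fsden (x :: l) = qeval x.1 *: << emb x.2 >> + fsden l.
Proof. exact: big_cons. Qed.

Lemma fsden_nil : fsden [::] = 0.
Proof. exact: big_nil. Qed.

Lemma fsden_single r k : fsden [:: ([:: r], k)] = ratr r *: << emb k >>.
Proof. by rewrite fsden_cons fsden_nil addr0 qevalC. Qed.

Lemma fsden_cat l1 l2 : fsden (l1 ++ l2) = fsden l1 + fsden l2.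
Proof. exact: big_cat. Qed.

Lemma fsden_flatten ls : fsden (flatten ls) = \sum_(l <- ls) fsden l.
Proof.
elim: ls => [|l ls IH]; first by rewrite /fsden !big_nil.
by rewrite big_cons -IH -fsden_cat.
Qed.

Lemma fsdenZ q l : fsden (fsZ q l) = qeval q *: fsden l.
Proof.
rewrite /fsden big_map scaler_sumr.
by apply: eq_bigr => x _; rewrite qevalM scalerA.
Qed.

Lemma fsden_scale_alpha l : alpha *: fsden l = fsden (fsZ [:: 0; 1] l).
Proof. by rewrite fsdenZ /= !rmorph0 rmorph1 mulr0 !addr0 add0r mulr1. Qed.

Lemma fsden_scale_2alpha l : (2 * alpha) *: fsden l = fsden (fsZ [:: 0; 2] l).
Proof. by rewrite fsdenZ /= !rmorph0 rmorph_nat mulr0 !addr0 add0r mulrC. Qed.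

Lemma fsden_scale_half l : ((1 + alpha) / 2) *: fsden l = fsden (fsZ [:: 1/2; 1/2] l).
Proof. by rewrite fsdenZ /= mulr0 addr0 rmorphM rmorph1 fmorphV rmorph_nat mulrDl mul1r mulrC. Qed.

Lemma fsdenN l : fsden (fsN l) = - fsden l.
Proof.
rewrite /fsden big_map -sumrN.
by apply: eq_bigr => x _; rewrite qevalN scaleNr.
Qed.

Lemma fsden_norm l : fsden (fsnorm l) = fsden l.
Proof.
have fsden_insert x l' : fsden (fsinsert x l') = fsden (x :: l').
  elim: l' => [|y l' IH] //=; case: eqP => [exy|_].
    by rewrite !fsden_cons /= exy qevalD scalerDl addrA.
  by rewrite !fsden_cons IH fsden_cons addrCA.
by elim: l => [|x l IH] //=; rewrite fsden_insert !fsden_cons IH.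
Qed.

Lemma fsden_eq0 l : fseq0 l -> fsden l = 0.
Proof.
rewrite /fseq0 -fsden_norm; elim: (fsnorm l) => [|x l' IH] /=; first by rewrite /fsden big_nil.
by case/andP => /(qeval_eq0 alpha) x0 /IH; rewrite fsden_cons x0 scale0r add0r.
Qed.

Lemma fsden_eq l1 l2 : fseq l1 l2 -> fsden l1 = fsden l2.
Proof. by move/fsden_eq0/eqP; rewrite fsden_cat fsdenN subr_eq0 => /eqP. Qed.

Lemma mcoeff_fsden l k : injective emb -> (fsden l)@_(emb k) = qeval (fscoef l k).
Proof.
move=> emb_inj; rewrite /fscoef qeval_sum big_map big_filter /fsden.
rewrite (big_morph (mcoeff (emb k)) (@mcoeffD _ _ _) (mcoeff0 _)) [RHS]big_mkcond /=.
by apply: eq_bigr => x _; rewrite mcoeffZ mcoeffU (inj_eq emb_inj); case: eqP; rewrite ?mulr1 ?mulr0.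
Qed.

Lemma lin1_fsden (V : lmodType R) (f : K' -> V) l :
  lin1 f (fsden l) = \sum_(x <- l) qeval x.1 *: f (emb x.2).
Proof.
rewrite linear_apply_sum; last exact: lin1_linear.
by apply: eq_bigr => x _; rewrite linear_applyZ ?lin1U //; exact: lin1_linear.
Qed.

Lemma fsden_lin (f : K' -> {malg R[K']}) (g : K -> fsum K) :
  (forall k, f (emb k) = fsden (g k)) -> forall l, lin1 f (fsden l) = fsden (fslin g l).
Proof.
move=> fg l; rewrite lin1_fsden fsden_flatten big_map.
by apply: eq_bigr => x _; rewrite fsdenZ fg.
Qed.

Lemma fsden_bilin (f : K' -> K' -> {malg R[K']}) (g : K -> K -> fsum K) :
  (forall k1 k2, f (emb k1) (emb k2) = fsden (g k1 k2)) ->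
  forall l1 l2, bilin f (fsden l1) (fsden l2) = fsden (fsbilin g l1 l2).
Proof.
move=> fg l1 l2; rewrite bilin_lin1 lin1_fsden fsden_flatten big_map.
apply: eq_bigr => x _; rewrite lin1_fsden fsden_flatten big_map scaler_sumr.
by apply: eq_bigr => y _; rewrite fsdenZ fg qevalM scalerA.
Qed.

Lemma fsden_comb c fam :
  fsden (comb_fs c fam) = \sum_(k < size fam) qeval (c k) *: fsden (nth [::] fam k).
Proof.
rewrite fsden_flatten big_map -[X in iota _ X]subn0 big_mkord.
by apply: eq_bigr => k _; rewrite fsdenZ.
Qed.

End Denotation.

Section DualCertificates.
Variables (R : numFieldType) (alpha : R) (T K : Type) (coef : T -> K -> ratpoly).

Lemma qeval_probe cert x :
  qeval alpha (probe_fs coef cert x) = \sum_(p <- cert) qeval alpha p.1 * qeval alpha (coef x p.2).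
Proof. by rewrite qeval_sum big_map; apply: eq_bigr => p _; rewrite qevalM. Qed.

Lemma dual_okP x0 fam cert : dual_ok coef x0 fam cert ->
  forall i j, (i < size fam)%N -> (j < size fam)%N ->
  qeval alpha (probe_fs coef (nth [::] cert i) (nth x0 fam j)) = (i == j)%:R.
Proof.
move=> /allP ok i j lt_i lt_j.
have := ok i; rewrite mem_iota add0n lt_i => /(_ isT) /allP /(_ j).
by rewrite mem_iota add0n lt_j => /(_ isT) /(qeval_eq alpha) ->; rewrite qevalC rmorph_nat.
Qed.

End DualCertificates.


(** * Executable model of P^+(4) *)

(* Subsets of 'I_4 as boolean quadruples: finset operations are locked and do
   not reduce under vm_compute. *)
Notation bits4 := (bool * bool * bool * bool)%type.

Definition bit (s : bits4) (i : nat) : bool :=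
  let: (b0, b1, b2, b3) := s in
  match i with 0 => b0 | 1 => b1 | 2 => b2 | _ => b3 end.

Definition setof (s : bits4) : {set 'I_4} := [set i : 'I_4 | bit s i].

Definition bits_union (s1 s2 : bits4) : bits4 :=
  (bit s1 0 || bit s2 0, bit s1 1 || bit s2 1, bit s1 2 || bit s2 2, bit s1 3 || bit s2 3).
Definition bits_disjoint (s1 s2 : bits4) : bool :=
  ~~ [|| bit s1 0 && bit s2 0, bit s1 1 && bit s2 1, bit s1 2 && bit s2 2 | bit s1 3 && bit s2 3].
Definition bits_remove (s : bits4) (j : nat) : bits4 :=
  (bit s 0 && (j != 0), bit s 1 && (j != 1), bit s 2 && (j != 2), bit s 3 && (j != 3)).
Definition bits_card (s : bits4) : nat := (bit s 0 + bit s 1 + bit s 2 + bit s 3)%N.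
Definition bits_below (s : bits4) (j : nat) : nat :=
  (bit s 0 && (0 < j) + bit s 1 && (1 < j) + bit s 2 && (2 < j) + bit s 3 && (3 < j))%N.
Definition bits_inversions (s1 s2 : bits4) : nat :=
  (bit s1 1 && bit s2 0 + bit s1 2 && bit s2 0 + bit s1 2 && bit s2 1
   + bit s1 3 && bit s2 0 + bit s1 3 && bit s2 1 + bit s1 3 && bit s2 2)%N.

Lemma card_I4 (A : {set 'I_4}) :
  #|A| = ((@Ordinal 4 0 isT \in A) + (@Ordinal 4 1 isT \in A)
          + (@Ordinal 4 2 isT \in A) + (@Ordinal 4 3 isT \in A))%N.
Proof.
rewrite -sum1_card big_mkcond /= !big_ord_recr big_ord0 /= add0n.
by congr (_ + _ + _ + _)%N; congr (nat_of_bool (_ \in A)); apply: val_inj.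
Qed.

Lemma setof_inj : injective setof.
Proof.
move=> s s' e; have h (i : 'I_4) : bit s i = bit s' i.
  by move/setP: e => /(_ i); rewrite !inE.
move: (h (@Ordinal 4 0 isT)) (h (@Ordinal 4 1 isT)) (h (@Ordinal 4 2 isT)) (h (@Ordinal 4 3 isT)); clear h e.
by case: s s' => [[[? ?] ?] ?] [[[? ?] ?] ?] /= -> -> -> ->.
Qed.

Lemma setofU s1 s2 : setof s1 :|: setof s2 = setof (bits_union s1 s2).
Proof.
apply/setP => i; rewrite !inE.
by case: s1 s2 => [[[? ?] ?] ?] [[[? ?] ?] ?]; case: i => [[|[|[|[|i]]]] hi].
Qed.

Lemma disjoint_setof s1 s2 : [disjoint setof s1 & setof s2] = bits_disjoint s1 s2.
Proof.
rewrite -setI_eq0 -cards_eq0 card_I4 !inE.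
case: s1 s2 => [[[a0 a1] a2] a3] [[[b0 b1] b2] b3] /=.
by case: a0; case: a1; case: a2; case: a3; case: b0; case: b1; case: b2; case: b3.
Qed.

Lemma card_setof s : #|setof s| = bits_card s.
Proof. by rewrite card_I4 !inE. Qed.

Lemma mem_setof_inord s (j : nat) : (j < 4)%N -> ((inord j : 'I_4) \in setof s) = bit s j.
Proof. by move=> lt_j4; rewrite inE inordK. Qed.

Lemma card_setof_below s (j : nat) : (j < 4)%N ->
  #|[set i in setof s | (i < (inord j : 'I_4))%N]| = bits_below s j.
Proof. by move=> lt_j4; rewrite card_I4 !inE inordK. Qed.

Lemma setofD1 s (j : nat) : (j < 4)%N -> setof s :\ inord j = setof (bits_remove s j).
Proof.
move=> lt_j4; apply/setP => i; rewrite !inE.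
have -> : (i != inord j) = (val i != j) by rewrite -(inj_eq val_inj) /= inordK.
case: s => [[[? ?] ?] ?].
by case: i => [[|[|[|[|i]]]] hi] //=; rewrite andbC eq_sym.
Qed.

Lemma card_setof_inversions s1 s2 :
  #|[set st : 'I_4 * 'I_4 | (st.1 \in setof s1) && (st.2 \in setof s2) && (st.2 < st.1)%N]|
  = bits_inversions s1 s2.
Proof.
rewrite -sum1_card big_mkcond /=; set S := [set st | _].
rewrite (eq_bigr (fun p => if (p.1, p.2) \in S then 1 else 0)%N); last by case.
rewrite -(pair_bigA _ (fun i j => if (i, j) \in S then 1 else 0)%N) /=.
rewrite !big_ord_recr !big_ord0 /= /S !inE /=; clear S.
case: s1 s2 => [[[a0 a1] a2] a3] [[[b0 b1] b2] b3] /=.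
by case: a0; case: a1; case: a2; case: a3; case: b0; case: b1; case: b2; case: b3.
Qed.

Notation pkey_fs := (int * nat * bits4)%type.
Definition pkey (k : pkey_fs) : PKey := (k.1.1, k.1.2, setof k.2).

Lemma pkey_inj : injective pkey.
Proof. by move=> [[a m] s] [[a' m'] s'] [-> -> /setof_inj ->]. Qed.

Definition pmul_mon_fs (u v : pkey_fs) : fsum pkey_fs :=
  let: (a, m, s1) := u in let: (b, n, s2) := v in
  if bits_disjoint s1 s2 then
    [:: ([:: (-1) ^+ bits_inversions s1 s2], (a + b, (m + n)%N, bits_union s1 s2))]
  else [::].
Definition pmul_fs := fsbilin pmul_mon_fs.
Definition pdt_fs : fsum pkey_fs -> fsum pkey_fs :=
  fslin (fun k => let: (a, m, s) := k in [:: ([:: a%:~R], (a - 1, m, s))]).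
Definition pdtau_fs : fsum pkey_fs -> fsum pkey_fs :=
  fslin (fun k => let: (a, m, s) := k in [:: ([:: m%:R], (a, m.-1, s))]).
Definition pdth_fs (j : nat) : fsum pkey_fs -> fsum pkey_fs :=
  fslin (fun k => let: (a, m, s) := k in
    if bit s j then [:: ([:: (-1) ^+ bits_below s j], (a, m, bits_remove s j))] else [::]).
Definition ppart_fs (b : bool) : fsum pkey_fs -> fsum pkey_fs :=
  fslin (fun k => if odd (bits_card k.2) == b then [:: ([:: 1], k)] else [::]).

Definition pbr_hom_fs (p : bool) (A B : fsum pkey_fs) : fsum pkey_fs :=
  let odd_part :=
    (pmul_fs (pdth_fs 0 A) (pdth_fs 2 B) ++ pmul_fs (pdth_fs 2 A) (pdth_fs 0 B))
    ++ (pmul_fs (pdth_fs 1 A) (pdth_fs 3 B) ++ pmul_fs (pdth_fs 3 A) (pdth_fs 1 B)) in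
  pmul_fs (pdtau_fs A) (pdt_fs B) ++ fsN (pmul_fs (pdt_fs A) (pdtau_fs B))
  ++ (if p then odd_part else fsN odd_part).

Definition pbr_fs (A B : fsum pkey_fs) : fsum pkey_fs :=
  pbr_hom_fs false (ppart_fs false A) B ++ pbr_hom_fs true (ppart_fs true A) B.

Section PoissonDenotation.
Variables (C : numClosedFieldType) (alpha : C).

Definition pden : fsum pkey_fs -> P C := fsden alpha pkey.

Lemma pmul_pden l1 l2 : pmul (pden l1) (pden l2) = pden (pmul_fs l1 l2).
Proof.
apply: fsden_bilin => -[[a m] s1] [[b n] s2]; rewrite /pkey /= disjoint_setof.
case: ifP => _; last by rewrite fsden_nil.
by rewrite card_setof_inversions setofU fsden_single rmorphXn rmorphN rmorph1.
Qed.

Lemma pdt_pden l : pdt (pden l) = pden (pdt_fs l).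
Proof. by apply: fsden_lin => -[[a m] s]; rewrite fsden_single ratr_int. Qed.

Lemma pdtau_pden l : pdtau (pden l) = pden (pdtau_fs l).
Proof. by apply: fsden_lin => -[[a m] s]; rewrite fsden_single ratr_nat. Qed.

Lemma pdth_pden (j : nat) l : (j < 4)%N -> pdth (inord j) (pden l) = pden (pdth_fs j l).
Proof.
move=> lt_j4; apply: fsden_lin => -[[a m] s] /=; rewrite mem_setof_inord //.
case: ifP => _; last by rewrite fsden_nil.
by rewrite card_setof_below // setofD1 // fsden_single rmorphXn rmorphN rmorph1.
Qed.

Lemma ppart_pden b l : ppart b (pden l) = pden (ppart_fs b l).
Proof.
apply: fsden_lin => -[[a m] s]; rewrite /podd /= card_setof.
by case: ifP => _; rewrite ?fsden_single ?rmorph1 ?scale1r ?fsden_nil.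
Qed.

Lemma pbr_hom_pden p A B : pbr_hom p (pden A) (pden B) = pden (pbr_hom_fs p A B).
Proof.
rewrite /pbr_hom !big_ord_recr big_ord0 /= add0r /xi_ /eta_ /=.
change (0 + 2)%N with 2%N; change (1 + 2)%N with 3%N.
rewrite !pdth_pden // !pdt_pden !pdtau_pden !pmul_pden /pbr_hom_fs /pden.
case: p; rewrite ?expr2 ?mulN1r ?opprK ?scale1r ?expr1 ?scaleN1r.
  by rewrite !fsden_cat fsdenN !addrA.
by rewrite !fsden_cat !fsdenN !fsden_cat !addrA.
Qed.

Lemma pbr_pden A B : pbr (pden A) (pden B) = pden (pbr_fs A B).
Proof. by rewrite /pbr !ppart_pden !pbr_hom_pden -fsden_cat. Qed.

End PoissonDenotation.

(** * Executable model of End(W^{2|2}) *)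

Notation wkey := (int * nat)%type.

Fixpoint falling_int (b : int) (k : nat) : int :=
  if k is k'.+1 then falling_int b k' * (b - k'%:Z) else 1.

Definition wmul_mon_fs (u v : wkey) : fsum wkey :=
  let: (a, m) := u in let: (b, n) := v in
  [seq ([:: ('C(m, k)%:R * (falling_int b k)%:~R : rat)], (a + b - k%:Z, (m + n - k)%N))
  | k <- iota 0 m.+1].
Definition wmul_fs := fsbilin wmul_mon_fs.

Notation mx_fs := (nat -> nat -> fsum wkey).

Definition mx0_fs : mx_fs := fun _ _ => [::].

Definition mxpart_fs (b : bool) (X : mx_fs) : mx_fs :=
  fun i j => if ((2 <= i)%N (+) (2 <= j)%N) == b then X i j else [::].
Definition mxmul_fs (X Y : mx_fs) : mx_fs :=
  fun i j => flatten [seq wmul_fs (X i k) (Y k j) | k <- iota 0 4].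
Definition mxadd_fs (X Y : mx_fs) : mx_fs := fun i j => X i j ++ Y i j.
Definition mxopp_fs (X : mx_fs) : mx_fs := fun i j => fsN (X i j).
Definition mxeq_fs (X Y : mx_fs) : bool :=
  all (fun i => all (fun j => fseq (X i j) (Y i j)) (iota 0 4)) (iota 0 4).
Definition Ekl_fs (k l : nat) (w : fsum wkey) : mx_fs :=
  fun i j => if (i.+1 == k) && (j.+1 == l) then w else [::].
Definition Idw_fs (w : fsum wkey) : mx_fs := fun i j => if i == j then w else [::].

Definition smbr_hom_fs (b c : bool) (X Y : mx_fs) : mx_fs :=
  let XY := mxmul_fs (mxpart_fs b X) (mxpart_fs c Y) in
  let YX := mxmul_fs (mxpart_fs c Y) (mxpart_fs b X) in
  mxadd_fs XY (mxopp_fs (if b && c then mxopp_fs YX else YX)).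
Definition smbr_fs (X Y : mx_fs) : mx_fs :=
  mxadd_fs (mxadd_fs (smbr_hom_fs true true X Y) (smbr_hom_fs true false X Y))
           (mxadd_fs (smbr_hom_fs false true X Y) (smbr_hom_fs false false X Y)).

Definition mxcomb_fs (c : nat -> ratpoly) (fam : seq mx_fs) : mx_fs :=
  fun r s => comb_fs c [seq X r s | X <- fam].

Section WeylDenotation.
Variables (C : numClosedFieldType) (alpha : C).

Definition wden : fsum wkey -> W C := fsden alpha id.
Definition mden (X : mx_fs) : SM C := \matrix_(i, j) wden (X i j).

Lemma wmon_wden a m : wmon C a m = wden [:: ([:: 1], (a, m))].
Proof. by rewrite /wden fsden_single rmorph1 scale1r. Qed.

Lemma wmul_wden l1 l2 : wmul (wden l1) (wden l2) = wden (wmul_fs l1 l2).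
Proof.
apply: fsden_bilin => -[a m] [b n]; rewrite /wmul_mon /wmul_mon_fs /fsden big_map.
rewrite -(big_mkord xpredT
  (fun k => << ('C(m, k)%:R * ffz C b k) *g (a + b - k%:Z, (m + n - k)%N) >>)).
apply: eq_bigr => k _ /=; rewrite mulr0 addr0 rmorphM rmorph_nat rmorph_int.
have -> : ffz C b k = (falling_int b k)%:~R.
  elim: k {m n} => [|k IH]; first by rewrite /ffz big_ord0.
  by rewrite /ffz big_ord_recr /= -/(ffz C b k) IH intrM.
by rewrite monalgUZ.
Qed.

Lemma mden_add X Y : mden (mxadd_fs X Y) = mden X + mden Y.
Proof. by apply/matrixP => i j; rewrite !mxE /wden fsden_cat. Qed.

Lemma mden_opp X : mden (mxopp_fs X) = - mden X.
Proof. by apply/matrixP => i j; rewrite !mxE /wden fsdenN. Qed.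

Lemma smpart_mden b X : smpart b (mden X) = mden (mxpart_fs b X).
Proof.
apply/matrixP => i j; rewrite !mxE /mxpart_fs /mpar.
by case: ifP => _; rewrite /wden ?fsden_nil.
Qed.

Lemma smmul_mden X Y : smmul (mden X) (mden Y) = mden (mxmul_fs X Y).
Proof.
apply/matrixP => i j; rewrite !mxE /mxmul_fs /wden fsden_flatten big_map.
have -> (F : nat -> W C) : \sum_(k <- iota 0 4) F k = \sum_(k < 4) F k.
  by rewrite -(big_mkord xpredT F).
by apply: eq_bigr => k _; rewrite !mxE wmul_wden.
Qed.

Lemma smbr_mden X Y : smbr (mden X) (mden Y) = mden (smbr_fs X Y).
Proof.
have sum_bool (F : bool -> SM C) : \sum_b F b = F true + F false by exact: big_bool.
rewrite /smbr !sum_bool !smpart_mden !smmul_mden.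
change (true && true) with true; change (true && false) with false.
change (false && true) with false; change (false && false) with false.
rewrite expr1 expr0 mulrN1z !mulr1z.
by rewrite -!mden_opp -!mden_add.
Qed.

Lemma Ekl_wden k l w : Ekl k l (wden w) = mden (Ekl_fs k l w).
Proof. by apply/matrixP => i j; rewrite !mxE /Ekl_fs; case: ifP; rewrite /wden ?fsden_nil. Qed.

Lemma Idw_wden w : Idw (wden w) = mden (Idw_fs w).
Proof. by apply/matrixP => i j; rewrite !mxE /Idw_fs val_eqE; case: ifP; rewrite /wden ?fsden_nil. Qed.

Lemma mden_eq X Y : mxeq_fs X Y -> mden X = mden Y.
Proof.
move=> XY; apply/matrixP => i j; rewrite !mxE; apply: fsden_eq.
move/allP: XY => /(_ i); rewrite mem_iota ltn_ord => /(_ isT) /allP /(_ j).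
by rewrite mem_iota ltn_ord => /(_ isT).
Qed.

End WeylDenotation.

Section PoissonBracketLinear.
Variable C : numClosedFieldType.

Lemma pbr_hom_linear_l p (B : P C) : linear (fun A => pbr_hom p A B).
Proof.
have lmul y := @bilin_linear_l C _ _ (@pmul_mon C) y.
apply: (linear_funD (U := P C)); first apply: linear_funB.
- exact: (linear_comp (lmul _) (lin1_linear _)).
- exact: (linear_comp (lmul _) (lin1_linear _)).
apply: linear_funZ; apply: linear_fun_sum => i; apply: linear_funD.
- exact: (linear_comp (lmul _) (lin1_linear _)).
- exact: (linear_comp (lmul _) (lin1_linear _)).
Qed.

Lemma pbr_hom_linear_r p (A : P C) : linear (pbr_hom p A).
Proof.
have lmul x := @bilin_linear_r C _ _ (@pmul_mon C) x.
apply: (linear_funD (U := P C)); first apply: linear_funB.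
- exact: (linear_comp (lmul _) (lin1_linear _)).
- exact: (linear_comp (lmul _) (lin1_linear _)).
apply: linear_funZ; apply: linear_fun_sum => i; apply: linear_funD.
- exact: (linear_comp (lmul _) (lin1_linear _)).
- exact: (linear_comp (lmul _) (lin1_linear _)).
Qed.

Lemma pbr_linear_l (B : P C) : linear (fun A => pbr A B).
Proof.
apply: (linear_funD (U := P C)); apply: (linear_comp (pbr_hom_linear_l _ _)).
  exact: lin1_linear.
exact: lin1_linear.
Qed.

Lemma pbr_linear_r (A : P C) : linear (pbr A).
Proof. by apply: (linear_funD (U := P C)); apply: pbr_hom_linear_r. Qed.

End PoissonBracketLinear.

(* Defs gives 'M[W]_4 no lmodType C structure, as W is not made a ring there;
   SMl carries the entrywise scaling.  In the matrix proofs, occurrence patterns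
   keep rewriting from comparing distinct matrix expressions over W by
   conversion, which is very slow. *)
Section SMLmodule.
Variable C : numClosedFieldType.

Definition smscale (a : C) (X : SM C) : SM C := \matrix_(i, j) (a *: X i j).

Lemma smscaleE a X i j : smscale a X i j = a *: X i j.
Proof. exact: mxE. Qed.

Lemma addsmE (X Y : SM C) i j : (X + Y) i j = X i j + Y i j.
Proof. exact: mxE. Qed.

Lemma smscaleA a b X : smscale a (smscale b X) = smscale (a * b) X.
Proof.
apply/matrixP => i j; rewrite [LHS]smscaleE [in LHS]smscaleE [RHS]smscaleE.
exact: scalerA.
Qed.

Lemma smscale1 X : smscale 1 X = X.
Proof. by apply/matrixP => i j; rewrite [LHS]smscaleE scale1r. Qed.

Lemma smscaleDr a : {morph smscale a : X Y / X + Y}.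
Proof.
move=> X Y; apply/matrixP => i j; rewrite [LHS]smscaleE [in LHS]addsmE [RHS]addsmE.
rewrite [X in _ = X + _]smscaleE [X in _ = _ + X]smscaleE.
exact: scalerDr.
Qed.

Lemma smscaleDl X : {morph smscale^~ X : a b / a + b}.
Proof.
move=> a b; apply/matrixP => i j; rewrite [LHS]smscaleE [RHS]addsmE.
rewrite [X in _ = X + _]smscaleE [X in _ = _ + X]smscaleE.
exact: scalerDl.
Qed.

Definition SMl := SM C.
HB.instance Definition _ := GRing.Zmodule.on SMl.
HB.instance Definition _ :=
  GRing.Zmodule_isLmodule.Build C SMl smscaleA smscale1 smscaleDr smscaleDl.

End SMLmodule.

Section SuperBracketLinear.
Variable C : numClosedFieldType.
Local Notation SMl := (SMl C).

Lemma scalesmE (a : C) (X : SMl) i j : (a *: X) i j = a *: X i j.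
Proof. exact: mxE. Qed.

Lemma smpartE b (X : SM C) i j :
  smpart b X i j = if mpar i (+) mpar j == b then X i j else 0.
Proof. exact: mxE. Qed.

Lemma smmulE (X Y : SM C) i j : smmul X Y i j = \sum_k wmul (X i k) (Y k j).
Proof. exact: mxE. Qed.

Lemma smpart_linear b : linear (smpart b : SMl -> SMl).
Proof.
move=> a X Y; apply/matrixP => i j; rewrite [LHS]smpartE [RHS]addsmE.
rewrite [in RHS]scalesmE (smpartE b X) (smpartE b Y) (addsmE (a *: X)) scalesmE.
by case: ifP; rewrite ?scaler0 ?addr0.
Qed.

Lemma smmul_linear_l (Y : SM C) : linear ((fun X => smmul X Y) : SMl -> SMl).
Proof.
move=> a X X'; apply/matrixP => i j; rewrite [LHS]smmulE [RHS]addsmE.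
rewrite [in RHS]scalesmE [X in _ = _ *: X + _]smmulE [X in _ = _ + X]smmulE.
rewrite scaler_sumr -big_split /=.
apply: eq_bigr => k _; rewrite (addsmE (a *: X)) scalesmE.
exact: bilin_linear_l.
Qed.

Lemma smmul_linear_r (X : SM C) : linear (smmul X : SMl -> SMl).
Proof.
move=> a Y Y'; apply/matrixP => i j; rewrite [LHS]smmulE [RHS]addsmE.
rewrite [in RHS]scalesmE [X in _ = _ *: X + _]smmulE [X in _ = _ + X]smmulE.
rewrite scaler_sumr -big_split /=.
apply: eq_bigr => k _; rewrite (addsmE (a *: Y)) scalesmE.
exact: bilin_linear_r.
Qed.

Lemma smbr_linear_l (Y : SMl) : linear ((fun X => smbr X Y) : SMl -> SMl).
Proof.
apply: linear_fun_sum => b; apply: linear_fun_sum => c; apply: linear_funB.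
- exact: linear_comp (smmul_linear_l _) (smpart_linear _).
- exact: linear_funMz (linear_comp (smmul_linear_r _) (smpart_linear _)).
Qed.

Lemma smbr_linear_r (X : SMl) : linear (smbr X : SMl -> SMl).
Proof.
apply: linear_fun_sum => b; apply: linear_fun_sum => c; apply: linear_funB.
- exact: linear_comp (smmul_linear_r _) (smpart_linear _).
- exact: linear_funMz (linear_comp (smmul_linear_l _) (smpart_linear _)).
Qed.

End SuperBracketLinear.

Definition bits0 : bits4 := (false, false, false, false).
Definition bits1 (j : nat) : bits4 := (j == 0, j == 1, j == 2, j == 3).

Definition ptp_fs (a : int) : fsum pkey_fs := [:: ([:: 1], (a, 0%N, bits0))].
Definition ptau_fs : fsum pkey_fs := [:: ([:: 1], (0, 1%N, bits0))].
Definition pth_fs (j : nat) : fsum pkey_fs := [:: ([:: 1], (0, 0%N, bits1 j))].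

Local Notation "x ** y" := (pmul_fs x y) (at level 40, left associativity).

Definition gam_fs : seq (fsum pkey_fs) :=
  [:: ptp_fs 2;
      ptau_fs ** ptau_fs
        ++ fsN (fsZ [:: 0; 2] (ptp_fs (-2) ** (pth_fs 0 ** (pth_fs 1 ** (pth_fs 2 ** pth_fs 3)))));
      ptp_fs 1 ** ptau_fs;
      pth_fs 0 ** pth_fs 1;
      pth_fs 2 ** pth_fs 3;
      pth_fs 0 ** pth_fs 2 ++ pth_fs 1 ** pth_fs 3;
      pth_fs 0 ** pth_fs 3;
      pth_fs 1 ** pth_fs 2;
      pth_fs 0 ** pth_fs 2 ++ fsN (pth_fs 1 ** pth_fs 3);
      ptp_fs 1 ** pth_fs 2;
      ptp_fs 1 ** pth_fs 3;
      ptp_fs 1 ** pth_fs 0;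
      ptp_fs 1 ** pth_fs 1;
      ptau_fs ** pth_fs 0 ++ fsZ [:: 0; 1] (ptp_fs (-1) ** (pth_fs 0 ** (pth_fs 1 ** pth_fs 3)));
      ptau_fs ** pth_fs 1 ++ fsN (fsZ [:: 0; 1] (ptp_fs (-1) ** (pth_fs 0 ** (pth_fs 1 ** pth_fs 2))));
      ptau_fs ** pth_fs 2 ++ fsZ [:: 0; 1] (ptp_fs (-1) ** (pth_fs 1 ** (pth_fs 2 ** pth_fs 3)));
      ptau_fs ** pth_fs 3 ++ fsN (fsZ [:: 0; 1] (ptp_fs (-1) ** (pth_fs 0 ** (pth_fs 2 ** pth_fs 3))))
  ].

Definition wmon_fs (a : int) (m : nat) : fsum wkey := [:: ([:: 1], (a, m))].
Local Notation w1 := (wmon_fs 0 0).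
Local Notation wt := (wmon_fs 1 0).
Local Notation wtinv := (wmon_fs (-1) 0).
Local Notation wd := (wmon_fs 0 1).
Local Notation dat := (wd ++ fsZ [:: 0; 1] wtinv).
Local Notation "x *w y" := (wmul_fs x y) (at level 40, left associativity).
Local Notation "x +m y" := (mxadd_fs x y) (at level 50, left associativity).

Definition rho_fs : seq mx_fs :=
  [:: Idw_fs (wmon_fs 2 0);
      Ekl_fs 1 1 (wd *w wd ++ fsZ [:: 0; 1] (wtinv *w wd))
      +m Ekl_fs 2 2 (wd *w wd ++ fsZ [:: 0; 1] (wtinv *w wd))
      +m Ekl_fs 3 3 (wd *w wd ++ fsZ [:: 0; 1] (wd *w wtinv))
      +m Ekl_fs 4 4 (wd *w wd ++ fsZ [:: 0; 1] (wd *w wtinv));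
      Idw_fs (wt *w wd ++ fsZ [:: 1/2; 1/2] w1);
      Ekl_fs 2 1 w1;
      mxopp_fs (Ekl_fs 1 2 w1);
      mxopp_fs (Ekl_fs 1 1 w1) +m Ekl_fs 2 2 w1;
      Ekl_fs 3 4 w1;
      Ekl_fs 4 3 w1;
      Ekl_fs 3 3 w1 +m mxopp_fs (Ekl_fs 4 4 w1);
      Ekl_fs 1 3 wt +m Ekl_fs 4 2 wt;
      Ekl_fs 1 4 wt +m mxopp_fs (Ekl_fs 3 2 wt);
      Ekl_fs 2 4 wt +m Ekl_fs 3 1 wt;
      mxopp_fs (Ekl_fs 2 3 wt) +m Ekl_fs 4 1 wt;
      Ekl_fs 2 4 dat +m Ekl_fs 3 1 wd;
      mxopp_fs (Ekl_fs 2 3 dat) +m Ekl_fs 4 1 wd;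
      Ekl_fs 1 3 dat +m Ekl_fs 4 2 wd;
      Ekl_fs 1 4 dat +m mxopp_fs (Ekl_fs 3 2 wd)
  ].

Section BasisDenotation.
Variables (C : numClosedFieldType) (alpha : C).

Lemma ptp_pden a : ptp a = pden alpha (ptp_fs a).
Proof.
rewrite /pden fsden_single rmorph1 scale1r /pkey /=.
by congr << (_, _, _) >>; apply/setP => -[[|[|[|[|i]]]] hi]; rewrite !inE.
Qed.

Lemma ptau_pden : ptau = pden alpha ptau_fs.
Proof.
rewrite /pden fsden_single rmorph1 scale1r /pkey /=.
by congr << (_, _, _) >>; apply/setP => -[[|[|[|[|i]]]] hi]; rewrite !inE.
Qed.

Lemma pth_pden (j : nat) : (j < 4)%N -> pth j = pden alpha (pth_fs j).
Proof.
move=> lt_j4; rewrite /pden fsden_single rmorph1 scale1r /pkey /=.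
congr << (_, _, _) >>; apply/setP => i; rewrite !inE -(inj_eq val_inj) /= inordK //.
by case: i => [[|[|[|[|i]]]] hi].
Qed.

Lemma gam_list_pden : gam_list alpha = map (pden alpha) gam_fs.
Proof.
rewrite /gam_list /pxi1 /pxi2 /peta1 /peta2 !ptp_pden ptau_pden !pth_pden //.
rewrite !pmul_pden /pden fsden_scale_2alpha !fsden_scale_alpha.
by rewrite -!fsdenN -!fsden_cat.
Qed.

Lemma rho_list_wden : rho_list alpha = map (mden alpha) rho_fs.
Proof.
rewrite /rho_list /Defs.w1 /Defs.wt /Defs.wtinv /Defs.wd !(wmon_wden alpha) !wmul_wden /wden.
rewrite !(fsden_scale_alpha alpha (@id wkey)) (fsden_scale_half alpha (@id wkey)).
rewrite -!(fsden_cat alpha (@id wkey)) -/(wden _ _).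
by rewrite !Ekl_wden !Idw_wden -!mden_opp -!mden_add.
Qed.

End BasisDenotation.

(* (i, j, [:: (k, c); ...]) stands for [B_i, B_j] = sum c B_k, with the basis
   indexed as in gam_list. *)
Definition sconst_table : seq (nat * nat * seq (nat * ratpoly)) :=
  [:: (0, 1, [:: (2, [:: -4])]);
  (0, 2, [:: (0, [:: -2])]);
  (0, 13, [:: (11, [:: -2])]);
  (0, 14, [:: (12, [:: -2])]);
  (0, 15, [:: (9, [:: -2])]);
  (0, 16, [:: (10, [:: -2])]);
  (1, 0, [:: (2, [:: 4])]);
  (1, 2, [:: (1, [:: 2])]);
  (1, 9, [:: (15, [:: 2])]);
  (1, 10, [:: (16, [:: 2])]);
  (1, 11, [:: (13, [:: 2])]);
  (1, 12, [:: (14, [:: 2])]);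
  (2, 0, [:: (0, [:: 2])]);
  (2, 1, [:: (1, [:: -2])]);
  (2, 9, [:: (9, [:: 1])]);
  (2, 10, [:: (10, [:: 1])]);
  (2, 11, [:: (11, [:: 1])]);
  (2, 12, [:: (12, [:: 1])]);
  (2, 13, [:: (13, [:: -1])]);
  (2, 14, [:: (14, [:: -1])]);
  (2, 15, [:: (15, [:: -1])]);
  (2, 16, [:: (16, [:: -1])]);
  (3, 4, [:: (5, [:: -1])]);
  (3, 5, [:: (3, [:: -2])]);
  (3, 9, [:: (12, [:: -1])]);
  (3, 10, [:: (11, [:: 1])]);
  (3, 15, [:: (14, [:: -1])]);
  (3, 16, [:: (13, [:: 1])]);
  (4, 3, [:: (5, [:: 1])]);
  (4, 5, [:: (4, [:: 2])]);
  (4, 11, [:: (10, [:: -1])]);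
  (4, 12, [:: (9, [:: 1])]);
  (4, 13, [:: (16, [:: -1])]);
  (4, 14, [:: (15, [:: 1])]);
  (5, 3, [:: (3, [:: 2])]);
  (5, 4, [:: (4, [:: -2])]);
  (5, 9, [:: (9, [:: -1])]);
  (5, 10, [:: (10, [:: -1])]);
  (5, 11, [:: (11, [:: 1])]);
  (5, 12, [:: (12, [:: 1])]);
  (5, 13, [:: (13, [:: 1])]);
  (5, 14, [:: (14, [:: 1])]);
  (5, 15, [:: (15, [:: -1])]);
  (5, 16, [:: (16, [:: -1])]);
  (6, 7, [:: (8, [:: 1])]);
  (6, 8, [:: (6, [:: -2])]);
  (6, 9, [:: (10, [:: -1])]);
  (6, 12, [:: (11, [:: 1])]);
  (6, 14, [:: (13, [:: 1])]);
  (6, 15, [:: (16, [:: -1])]);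
  (7, 6, [:: (8, [:: -1])]);
  (7, 8, [:: (7, [:: 2])]);
  (7, 10, [:: (9, [:: -1])]);
  (7, 11, [:: (12, [:: 1])]);
  (7, 13, [:: (14, [:: 1])]);
  (7, 16, [:: (15, [:: -1])]);
  (8, 6, [:: (6, [:: 2])]);
  (8, 7, [:: (7, [:: -2])]);
  (8, 9, [:: (9, [:: -1])]);
  (8, 10, [:: (10, [:: 1])]);
  (8, 11, [:: (11, [:: 1])]);
  (8, 12, [:: (12, [:: -1])]);
  (8, 13, [:: (13, [:: 1])]);
  (8, 14, [:: (14, [:: -1])]);
  (8, 15, [:: (15, [:: -1])]);
  (8, 16, [:: (16, [:: 1])]);
  (9, 1, [:: (15, [:: -2])]);
  (9, 2, [:: (9, [:: -1])]);
  (9, 3, [:: (12, [:: 1])]);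
  (9, 5, [:: (9, [:: 1])]);
  (9, 6, [:: (10, [:: 1])]);
  (9, 8, [:: (9, [:: 1])]);
  (9, 11, [:: (0, [:: 1])]);
  (9, 13, [:: (2, [:: 1]); (5, [:: 1/2; 1/2]); (8, [:: 1/2; -1/2])]);
  (9, 14, [:: (7, [:: 1; -1])]);
  (9, 16, [:: (4, [:: -1; -1])]);
  (10, 1, [:: (16, [:: -2])]);
  (10, 2, [:: (10, [:: -1])]);
  (10, 3, [:: (11, [:: -1])]);
  (10, 5, [:: (10, [:: 1])]);
  (10, 7, [:: (9, [:: 1])]);
  (10, 8, [:: (10, [:: -1])]);
  (10, 12, [:: (0, [:: 1])]);
  (10, 13, [:: (6, [:: 1; -1])]);
  (10, 14, [:: (2, [:: 1]); (5, [:: 1/2; 1/2]); (8, [:: -1/2; 1/2])]);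
  (10, 15, [:: (4, [:: 1; 1])]);
  (11, 1, [:: (13, [:: -2])]);
  (11, 2, [:: (11, [:: -1])]);
  (11, 4, [:: (10, [:: 1])]);
  (11, 5, [:: (11, [:: -1])]);
  (11, 7, [:: (12, [:: -1])]);
  (11, 8, [:: (11, [:: -1])]);
  (11, 9, [:: (0, [:: 1])]);
  (11, 14, [:: (3, [:: -1; -1])]);
  (11, 15, [:: (2, [:: 1]); (5, [:: -1/2; -1/2]); (8, [:: -1/2; 1/2])]);
  (11, 16, [:: (6, [:: -1; 1])]);
  (12, 1, [:: (14, [:: -2])]);
  (12, 2, [:: (12, [:: -1])]);
  (12, 4, [:: (9, [:: -1])]);
  (12, 5, [:: (12, [:: -1])]);
  (12, 6, [:: (11, [:: -1])]);
  (12, 8, [:: (12, [:: 1])]);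
  (12, 10, [:: (0, [:: 1])]);
  (12, 13, [:: (3, [:: 1; 1])]);
  (12, 15, [:: (7, [:: -1; 1])]);
  (12, 16, [:: (2, [:: 1]); (5, [:: -1/2; -1/2]); (8, [:: 1/2; -1/2])]);
  (13, 0, [:: (11, [:: 2])]);
  (13, 2, [:: (13, [:: 1])]);
  (13, 4, [:: (16, [:: 1])]);
  (13, 5, [:: (13, [:: -1])]);
  (13, 7, [:: (14, [:: -1])]);
  (13, 8, [:: (13, [:: -1])]);
  (13, 9, [:: (2, [:: 1]); (5, [:: 1/2; 1/2]); (8, [:: 1/2; -1/2])]);
  (13, 10, [:: (6, [:: 1; -1])]);
  (13, 12, [:: (3, [:: 1; 1])]);
  (13, 15, [:: (1, [:: 1])]);
  (14, 0, [:: (12, [:: 2])]);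
  (14, 2, [:: (14, [:: 1])]);
  (14, 4, [:: (15, [:: -1])]);
  (14, 5, [:: (14, [:: -1])]);
  (14, 6, [:: (13, [:: -1])]);
  (14, 8, [:: (14, [:: 1])]);
  (14, 9, [:: (7, [:: 1; -1])]);
  (14, 10, [:: (2, [:: 1]); (5, [:: 1/2; 1/2]); (8, [:: -1/2; 1/2])]);
  (14, 11, [:: (3, [:: -1; -1])]);
  (14, 16, [:: (1, [:: 1])]);
  (15, 0, [:: (9, [:: 2])]);
  (15, 2, [:: (15, [:: 1])]);
  (15, 3, [:: (14, [:: 1])]);
  (15, 5, [:: (15, [:: 1])]);
  (15, 6, [:: (16, [:: 1])]);
  (15, 8, [:: (15, [:: 1])]);
  (15, 10, [:: (4, [:: 1; 1])]);
  (15, 11, [:: (2, [:: 1]); (5, [:: -1/2; -1/2]); (8, [:: -1/2; 1/2])]);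
  (15, 12, [:: (7, [:: -1; 1])]);
  (15, 13, [:: (1, [:: 1])]);
  (16, 0, [:: (10, [:: 2])]);
  (16, 2, [:: (16, [:: 1])]);
  (16, 3, [:: (13, [:: -1])]);
  (16, 5, [:: (16, [:: 1])]);
  (16, 7, [:: (15, [:: 1])]);
  (16, 8, [:: (16, [:: -1])]);
  (16, 9, [:: (4, [:: -1; -1])]);
  (16, 11, [:: (6, [:: -1; 1])]);
  (16, 12, [:: (2, [:: 1]); (5, [:: -1/2; -1/2]); (8, [:: 1/2; -1/2])]);
  (16, 14, [:: (1, [:: 1])])].

Definition sconst (i j k : nat) : ratpoly :=
  qsum [seq x.2 | x <- flatten [seq e.2 | e <- sconst_table & e.1 == (i, j)] & x.1 == k].

Definition gam_bracket_ok : bool :=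
  all (fun i => all (fun j =>
    fseq (pbr_fs (nth [::] gam_fs i) (nth [::] gam_fs j)) (comb_fs (sconst i j) gam_fs))
  (iota 0 17)) (iota 0 17).

Definition rho_bracket_ok : bool :=
  all (fun i => all (fun j =>
    mxeq_fs (smbr_fs (nth mx0_fs rho_fs i) (nth mx0_fs rho_fs j))
            (mxcomb_fs (sconst i j) rho_fs))
  (iota 0 17)) (iota 0 17).

Lemma gam_bracket_okT : gam_bracket_ok. Proof. by vm_compute. Qed.
Lemma rho_bracket_okT : rho_bracket_ok. Proof. by vm_compute. Qed.

Definition gam_parity_ok : bool :=
  all (fun i => fseq (ppart_fs (9 <= i)%N (nth [::] gam_fs i)) (nth [::] gam_fs i)) (iota 0 17).

Definition rho_parity_ok : bool :=
  all (fun i => mxeq_fs (mxpart_fs (9 <= i)%N (nth mx0_fs rho_fs i))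
                        (nth mx0_fs rho_fs i)) (iota 0 17).

Lemma gam_parity_okT : gam_parity_ok. Proof. by vm_compute. Qed.
Lemma rho_parity_okT : rho_parity_ok. Proof. by vm_compute. Qed.

(* Weighted points (keys of P^+(4), resp. entry and key of t^a d^m) whose
   coefficient functionals take the value delta_ij on the j-th element. *)
Definition gam_dual : seq (seq (ratpoly * pkey_fs)) :=
  [:: [:: ([:: 1], (2, 0%N, bits0))];
      [:: ([:: 1], (0, 2%N, bits0))];
      [:: ([:: 1], (1, 1%N, bits0))];
      [:: ([:: 1], (0, 0%N, (true, true, false, false)))];
      [:: ([:: 1], (0, 0%N, (false, false, true, true)))];
      [:: ([:: 1/2], (0, 0%N, (true, false, true, false)));
          ([:: 1/2], (0, 0%N, (false, true, false, true)))];
      [:: ([:: 1], (0, 0%N, (true, false, false, true)))];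
      [:: ([:: 1], (0, 0%N, (false, true, true, false)))];
      [:: ([:: 1/2], (0, 0%N, (true, false, true, false)));
          ([:: -1/2], (0, 0%N, (false, true, false, true)))];
      [:: ([:: 1], (1, 0%N, bits1 2))];
      [:: ([:: 1], (1, 0%N, bits1 3))];
      [:: ([:: 1], (1, 0%N, bits1 0))];
      [:: ([:: 1], (1, 0%N, bits1 1))];
      [:: ([:: 1], (0, 1%N, bits1 0))];
      [:: ([:: 1], (0, 1%N, bits1 1))];
      [:: ([:: 1], (0, 1%N, bits1 2))];
      [:: ([:: 1], (0, 1%N, bits1 3))]].

Local Notation i4 n := (@Ordinal 4 n isT).

Definition rho_dual : seq (seq (ratpoly * ('I_4 * 'I_4 * wkey))) :=
  [:: [:: ([:: 1], (i4 0, i4 0, (2, 0%N)))];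
      [:: ([:: 1], (i4 0, i4 0, (0, 2%N)))];
      [:: ([:: 1], (i4 0, i4 0, (1, 1%N)))];
      [:: ([:: 1], (i4 1, i4 0, (0, 0%N)))];
      [:: ([:: -1], (i4 0, i4 1, (0, 0%N)))];
      [:: ([:: 1], (i4 1, i4 1, (0, 0%N))); ([:: -1/2; -1/2], (i4 0, i4 0, (1, 1%N)))];
      [:: ([:: 1], (i4 2, i4 3, (0, 0%N)))];
      [:: ([:: 1], (i4 3, i4 2, (0, 0%N)))];
      [:: ([:: 1], (i4 2, i4 2, (0, 0%N))); ([:: -1/2; -1/2], (i4 0, i4 0, (1, 1%N)))];
      [:: ([:: 1], (i4 0, i4 2, (1, 0%N)))];
      [:: ([:: 1], (i4 0, i4 3, (1, 0%N)))];
      [:: ([:: 1], (i4 1, i4 3, (1, 0%N)))];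
      [:: ([:: -1], (i4 1, i4 2, (1, 0%N)))];
      [:: ([:: 1], (i4 1, i4 3, (0, 1%N)))];
      [:: ([:: -1], (i4 1, i4 2, (0, 1%N)))];
      [:: ([:: 1], (i4 0, i4 2, (0, 1%N)))];
      [:: ([:: 1], (i4 0, i4 3, (0, 1%N)))]].

Lemma gam_dual_okT : dual_ok (@fscoef _) [::] gam_fs gam_dual.
Proof. by vm_compute. Qed.

Lemma rho_dual_okT :
  dual_ok (fun (X : mx_fs) (p : 'I_4 * 'I_4 * wkey) => fscoef (X p.1.1 p.1.2) p.2) mx0_fs rho_fs rho_dual.
Proof. by vm_compute. Qed.

Section GammaAlpha.
Variables (C : numClosedFieldType) (alpha : C).

Lemma in_iota17 (i : 'I_17) : (i : nat) \in iota 0 17.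
Proof. by rewrite mem_iota ltn_ord. Qed.

Lemma gam_pden (i : 'I_17) : gam alpha i = pden alpha (nth [::] gam_fs i).
Proof. by rewrite /gam gam_list_pden (nth_map [::]). Qed.

Lemma rho_mden (i : 'I_17) : rho alpha i = mden alpha (nth mx0_fs rho_fs i).
Proof. by rewrite /rho rho_list_wden (nth_map mx0_fs). Qed.

Lemma gam_homogeneous i : ppart (gpar i) (gam alpha i) = gam alpha i.
Proof.
rewrite gam_pden ppart_pden; apply: fsden_eq.
by have /allP := gam_parity_okT; apply; apply: in_iota17.
Qed.

Lemma rho_homogeneous i : smpart (gpar i) (rho alpha i) = rho alpha i.
Proof.
rewrite rho_mden smpart_mden; apply: mden_eq.
by have /allP := rho_parity_okT; apply; apply: in_iota17.
Qed.

Lemma gam_bracket (i j : 'I_17) :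
  pbr (gam alpha i) (gam alpha j) = \sum_(k < 17) qeval alpha (sconst i j k) *: gam alpha k.
Proof.
rewrite !gam_pden pbr_pden /pden.
have /allP/(_ _ (in_iota17 i))/allP/(_ _ (in_iota17 j)) := gam_bracket_okT.
move/(fsden_eq alpha pkey) ->; rewrite fsden_comb.
by apply: eq_bigr => k _; rewrite gam_pden.
Qed.

Lemma gamma_coef c k : (gamma alpha c)@_k = \sum_j c j * (gam alpha j)@_k.
Proof. by rewrite /gamma raddf_sum; apply: eq_bigr => j _; exact: mcoeffZ. Qed.

Lemma gam_coord c (i : 'I_17) :
  c i = \sum_(p <- nth [::] gam_dual i) qeval alpha p.1 * (gamma alpha c)@_(pkey p.2).
Proof.
pose cert (i : 'I_17) := [seq (qeval alpha p.1, p.2) | p <- nth [::] gam_dual i].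
have dual i' j : \sum_(p <- cert i') p.1 * (gam alpha j)@_(pkey p.2) = (i' == j)%:R.
  rewrite big_map -(dual_okP alpha gam_dual_okT) ?ltn_ord // qeval_probe.
  by apply: eq_bigr => p _; rewrite gam_pden mcoeff_fsden //; exact: pkey_inj.
rewrite (@coord_of_dual _ _ _ (fun k j => (gam alpha j)@_(pkey k)) cert dual c i) big_map.
by apply: eq_bigr => p _; rewrite gamma_coef.
Qed.

End GammaAlpha.

Section RhoAlpha.
Variables (C : numClosedFieldType) (alpha : C).

Lemma mden_comb c fam :
  (mden alpha (mxcomb_fs c fam) : SMl C)
  = \sum_(k < size fam) qeval alpha (c k) *: (mden alpha (nth mx0_fs fam k) : SMl C).
Proof.
apply/matrixP => r s; rewrite [LHS]mxE [RHS]summxE /wden fsden_comb size_map.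
apply: eq_bigr => k _; rewrite scalesmE [X in _ = _ *: X]mxE (nth_map mx0_fs) //.
Qed.

Lemma rho_bracket (i j : 'I_17) :
  (smbr (rho alpha i) (rho alpha j) : SMl C)
  = \sum_(k < 17) qeval alpha (sconst i j k) *: (rho alpha k : SMl C).
Proof.
rewrite !rho_mden smbr_mden.
have /allP/(_ _ (in_iota17 i))/allP/(_ _ (in_iota17 j)) := rho_bracket_okT.
move/(mden_eq alpha) ->; rewrite mden_comb.
by apply: eq_bigr => k _; rewrite rho_mden.
Qed.

Lemma rhoc_sum c : (rhoc alpha c : SMl C) = \sum_i c i *: (rho alpha i : SMl C).
Proof.
apply/matrixP => k l; rewrite [LHS]mxE [RHS]summxE.
by apply: eq_bigr => i _; rewrite scalesmE.
Qed.

Lemma rhoc_coef c r s k : (rhoc alpha c r s)@_k = \sum_j c j * (rho alpha j r s)@_k.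
Proof. by rewrite [in LHS]mxE raddf_sum; apply: eq_bigr => j _; exact: mcoeffZ. Qed.

Lemma rho_coord c (i : 'I_17) :
  c i = \sum_(p <- nth [::] rho_dual i) qeval alpha p.1 * (rhoc alpha c p.2.1.1 p.2.1.2)@_p.2.2.
Proof.
pose cert (i : 'I_17) := [seq (qeval alpha p.1, p.2) | p <- nth [::] rho_dual i].
have dual i' j :
    \sum_(p <- cert i') p.1 * (rho alpha j p.2.1.1 p.2.1.2)@_p.2.2 = (i' == j)%:R.
  rewrite big_map -(dual_okP alpha rho_dual_okT) ?ltn_ord // qeval_probe.
  by apply: eq_bigr => p _; rewrite rho_mden mxE (@mcoeff_fsden _ _ _ _ id).
rewrite (@coord_of_dual _ _ _ (fun p j => (rho alpha j p.1.1 p.1.2)@_p.2) cert dual c i).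
by rewrite big_map; apply: eq_bigr => p _; rewrite rhoc_coef.
Qed.

End RhoAlpha.

Theorem theorem3p1 (C : numClosedFieldType) (alpha : C) :
  (forall c : 'I_17 -> C, gamma alpha c = 0 -> forall i, c i = 0)
  /\ (forall i : 'I_17, ppart (gpar i) (gam alpha i) = gam alpha i
                     /\ smpart (gpar i) (rho alpha i) = rho alpha i)
  /\ (forall c1 c2 : 'I_17 -> C, exists c3 : 'I_17 -> C,
        pbr (gamma alpha c1) (gamma alpha c2) = gamma alpha c3
        /\ smbr (rhoc alpha c1) (rhoc alpha c2) = rhoc alpha c3)
  /\ (forall c1 c2 : 'I_17 -> C,
        rhoc alpha c1 = rhoc alpha c2 -> gamma alpha c1 = gamma alpha c2).
Proof.
split; [|split; [|split]].
- move=> c c0 i; rewrite (gam_coord alpha c i) c0.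
  by rewrite big1 // => p _; rewrite mcoeff0 mulr0.
- by move=> i; rewrite gam_homogeneous rho_homogeneous.
- move=> c1 c2; exists (fun k => \sum_i \sum_j c1 i * c2 j * qeval alpha (sconst i j k)).
  split; first exact: (bilinear_structure_constants (@pbr_linear_l C) (@pbr_linear_r C)
                                                     (gam_bracket alpha)).
  rewrite !rhoc_sum.
  exact: (@bilinear_structure_constants _ (SMl C) (SMl C) _ (@smbr C) _ _ _
           (@smbr_linear_l C) (@smbr_linear_r C) (rho_bracket alpha)).
- move=> c1 c2 e; rewrite /gamma; apply: eq_bigr => i _.
  by rewrite (rho_coord alpha c1) e -rho_coord.
Qed.
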